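(* Let $(X,d,0)$ be a pointed metric space, let $(Y_j)_{j\in\varGamma}$ be a family of subsets of $X$, and let $(R_j)_{j\in\varGamma}$ be Lipschitz maps $R_j:X\to Y_j$ with $R_j(0)=0$ (so $0\in Y_j$) and $M:=\sup_{j}\|R_j\|_{\operatorname{Lip}}<\infty$. Suppose $\mathcal{U}$ is an ultrafilter on $\varGamma$ such that $\lim_{\mathcal{U}}R_j(x)=x$ in $(X,d)$ for every $x\in X$. Then \[\operatorname{Lip}_0(X)\stackrel{c}{\hookrightarrow}\left(\bigoplus_{j\in\varGamma}\operatorname{Lip}_0(Y_j)\right)_{\ell_\infty},\] where each $Y_j$ is pointed at $0$.
   Context: $\operatorname{Lip}_0(Z)$ denotes the Banach space of real Lipschitz functions on the pointed metric space $Z$ vanishing at the base point, normed by the smallest Lipschitz constant $\|\cdot\|_{\operatorname{Lip}}$ (also used for Lipschitz constants of maps). $\left(\bigoplus_jZ_j\right)_{\ell_\infty}$ is the space of families $(z_j)$ with $\sup_j\|z_j\|<\infty$ and the sup norm. $X\stackrel{c}{\hookrightarrow}Y$ means $Y$ contains a complemented subspace isomorphic to $X$. *)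

From Stdlib Require Import Reals.
Open Scope R_scope.

Record is_metric (X : Type) (d : X -> X -> R) : Prop := {
  metric_refl : forall x, d x x = 0;
  metric_sep  : forall x y, d x y = 0 -> x = y;
  metric_sym  : forall x y, d x y = d y x;
  metric_tri  : forall x y z, d x z <= d x y + d y z
}.

Record is_ultrafilter (G : Type) (U : (G -> Prop) -> Prop) : Prop := {
  uf_full   : U (fun _ => True);
  uf_proper : ~ U (fun _ => False);
  uf_mono   : forall A B : G -> Prop, (forall j, A j -> B j) -> U A -> U B;
  uf_inter  : forall A B : G -> Prop, U A -> U B -> U (fun j => A j /\ B j);
  uf_ultra  : forall A : G -> Prop, U A \/ U (fun j => ~ A j)
}.

Definition lipschitz_with {A B : Type} (dA : A -> A -> R) (dB : B -> B -> R)
  (f : A -> B) (L : R) : Prop :=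
  0 <= L /\ forall x y, dB (f x) (f y) <= L * dA x y.

Definition dR (a b : R) : R := Rabs (a - b).

Definition Lip0 {A : Type} (dA : A -> A -> R) (a0 : A) (f : A -> R) : Prop :=
  f a0 = 0 /\ exists L, lipschitz_with dA dR f L.

(* A subset Y of X as a metric space (restriction of d), pointed at x0. *)
Definition dsub {X : Type} (d : X -> X -> R) (P : X -> Prop)
  (u v : {x : X | P x}) : R := d (proj1_sig u) (proj1_sig v).

Definition Lip0_sub {X : Type} (d : X -> X -> R) (x0 : X) (P : X -> Prop)
  (f : {x : X | P x} -> R) : Prop :=
  (forall h : P x0, f (exist _ x0 h) = 0) /\ exists L, lipschitz_with (dsub d P) dR f L.

Definition Fam {G X : Type} (Y : G -> X -> Prop) : Type :=
  forall j : G, {x : X | Y j x} -> R.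

Definition fam_add {G X} {Y : G -> X -> Prop} (F H : Fam Y) : Fam Y :=
  fun j y => F j y + H j y.
Definition fam_scal {G X} {Y : G -> X -> Prop} (a : R) (F : Fam Y) : Fam Y :=
  fun j y => a * F j y.
Definition fam_zero {G X} {Y : G -> X -> Prop} : Fam Y := fun j y => 0.

Definition linf_norm_le {G X} (d : X -> X -> R) (Y : G -> X -> Prop)
  (F : Fam Y) (L : R) : Prop :=
  forall j, lipschitz_with (dsub d (Y j)) dR (F j) L.

Definition in_linf_Lip0 {G X} (d : X -> X -> R) (x0 : X) (Y : G -> X -> Prop)
  (F : Fam Y) : Prop :=
  (forall j, Lip0_sub d x0 (Y j) (F j)) /\ exists L, linf_norm_le d Y F L.

Definition Lip0_compl_embeds {G X : Type} (d : X -> X -> R) (x0 : X)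
  (Y : G -> X -> Prop) : Prop :=
  exists (S : Fam Y -> Prop) (Q : Fam Y -> Fam Y) (J : (X -> R) -> Fam Y),
    (* S is a linear subspace of the ell_infty sum *)
    (forall F, S F -> in_linf_Lip0 d x0 Y F) /\
    S fam_zero /\
    (forall F H a, S F -> S H -> S (fam_add F H) /\ S (fam_scal a F)) /\
    (* Q is a bounded linear projection of the sum onto S *)
    (forall F, in_linf_Lip0 d x0 Y F -> S (Q F)) /\
    (forall F, S F -> Q F = F) /\
    (forall F H a, in_linf_Lip0 d x0 Y F -> in_linf_Lip0 d x0 Y H ->
        Q (fam_add F H) = fam_add (Q F) (Q H) /\ Q (fam_scal a F) = fam_scal a (Q F)) /\
    (exists C, forall F L, in_linf_Lip0 d x0 Y F -> linf_norm_le d Y F L ->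
        linf_norm_le d Y (Q F) (C * L)) /\
    (* J is a linear isomorphism from Lip_0(X) onto S *)
    (forall f, Lip0 d x0 f -> S (J f)) /\
    (forall F, S F -> exists f, Lip0 d x0 f /\ J f = F) /\
    (forall f g a, Lip0 d x0 f -> Lip0 d x0 g ->
        J (fun x => f x + g x) = fam_add (J f) (J g) /\
        J (fun x => a * f x) = fam_scal a (J f)) /\
    (exists C, forall f L, Lip0 d x0 f -> lipschitz_with d dR f L ->
        linf_norm_le d Y (J f) (C * L)) /\
    (exists c, forall f L, Lip0 d x0 f -> linf_norm_le d Y (J f) L ->
        lipschitz_with d dR f (c * L)).

(* Restriction J f := (f|_{Y_j})_j maps Lip_0(X) linearly into
   the ℓ∞-sum without increasing norms.  Conversely, a bounded family
   F = (F_j)_j is sent to the function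
       ext F (x) := lim_U F_j (R_j x),
   which exists because |F_j (R_j x)| <= ||F|| * M * d(x, 0) (bounded real
   families converge along an ultrafilter), is linear in F, vanishes at 0 and
   is (M ||F||)-Lipschitz since limits along U preserve non-strict bounds.
   For Lipschitz f we have f (R_j x) -> f x, so ext (J f) = f.  Hence
   Q := J ∘ ext is a bounded linear projection onto S := J(Lip_0(X)), J is an
   isomorphism onto S, and the bound ||f|| <= M ||J f|| follows from
   f = ext (J f). *)

From Stdlib Require Import Reals Lra Classical ClassicalEpsilon FunctionalExtensionality.
Open Scope R_scope.

Ltac solve_Rabs := unfold Rabs in *; repeat match goal with
  | |- context[Rcase_abs ?x] => destruct (Rcase_abs x)
  | H : context[Rcase_abs ?x] |- _ => destruct (Rcase_abs x) end; lra.

Lemma mult_lt_of_lt_div (K t eps : R) :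
  0 <= K -> 0 < eps -> t < eps / (K + 1) -> K * t < eps.
Proof.
  intros HK He Ht.
  assert (E : K * (eps / (K + 1)) = eps - eps / (K + 1)) by (field; lra).
  assert (P : 0 < eps / (K + 1)) by (apply Rdiv_lt_0_compat; lra).
  assert (K * t <= K * (eps / (K + 1))) by (apply Rmult_le_compat_l; lra).
  lra.
Qed.

Section UltraLimits.

Variables (G : Type) (U : (G -> Prop) -> Prop).
Hypothesis HU : is_ultrafilter G U.

Definition uconv (a : G -> R) (l : R) : Prop :=
  forall eps, 0 < eps -> U (fun j => Rabs (a j - l) < eps).

Lemma uf_nonempty (A : G -> Prop) : U A -> exists j, A j.
Proof.
  intros HA. apply NNPP; intro Hn. apply (uf_proper _ _ HU).
  apply (uf_mono _ _ HU A); auto. intros j Aj; apply Hn; eauto.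
Qed.

Lemma uf_always (A : G -> Prop) : (forall j, A j) -> U A.
Proof.
  intros HA. apply (uf_mono _ _ HU (fun _ => True)); auto. apply (uf_full _ _ HU).
Qed.

Lemma uconv_unique (a : G -> R) (l1 l2 : R) : uconv a l1 -> uconv a l2 -> l1 = l2.
Proof.
  intros H1 H2. destruct (Req_dec l1 l2) as [|Hne]; auto.
  assert (He : 0 < Rabs (l1 - l2) / 2).
  { assert (0 < Rabs (l1 - l2)) by (apply Rabs_pos_lt; lra). lra. }
  destruct (uf_nonempty _ (uf_inter _ _ HU _ _ (H1 _ He) (H2 _ He))) as [j [A B]].
  exfalso. solve_Rabs.
Qed.

(* Every bounded real family converges along an ultrafilter: its limit is the
   supremum of the reals [t] with [t <= a j] for U-almost every [j]. *)
Lemma uconv_of_bounded (a : G -> R) (B : R) :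
  (forall j, Rabs (a j) <= B) -> exists l, uconv a l.
Proof.
  intros Hb.
  set (E := fun t => U (fun j => t <= a j)).
  assert (Hub : is_upper_bound E B).
  { intros t Ht. destruct (Rle_lt_dec t B) as [|Hl]; auto.
    destruct (uf_nonempty _ Ht) as [j Hj]. specialize (Hb j). exfalso; solve_Rabs. }
  assert (HE : E (- B)) by (apply uf_always; intros j; specialize (Hb j); solve_Rabs).
  destruct (completeness E (ex_intro _ B Hub) (ex_intro _ _ HE)) as [m [Hm1 Hm2]].
  exists m. intros eps He.
  assert (Hbelow : exists t, E t /\ m - eps < t).
  { apply NNPP; intro Hn.
    assert (is_upper_bound E (m - eps)).
    { intros t Et. destruct (Rle_lt_dec t (m - eps)) as [|Hl]; auto.
      exfalso; apply Hn; eauto. }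
    specialize (Hm2 _ H). lra. }
  destruct Hbelow as [t [Et Ht]].
  assert (Habove : ~ E (m + eps / 2)) by (intro Hc; specialize (Hm1 _ Hc); lra).
  destruct (uf_ultra _ _ HU (fun j => m + eps / 2 <= a j)) as [Hc|Hc]; [contradiction|].
  refine (uf_mono _ _ HU _ _ (fun j H => _) (uf_inter _ _ HU _ _ Et Hc)).
  destruct H as [H1 H2]. apply Rnot_le_lt in H2. solve_Rabs.
Qed.

(* The limit along U of a convergent family (an arbitrary value otherwise). *)
Definition ulim (a : G -> R) : R := epsilon (inhabits 0) (fun l => uconv a l).

Lemma ulim_eq (a : G -> R) (l : R) : uconv a l -> ulim a = l.
Proof.
  intro H. unfold ulim.
  apply (uconv_unique a); [|exact H].
  exact (epsilon_spec (inhabits 0) (fun l => uconv a l) (ex_intro _ l H)).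
Qed.

Lemma uconv_const (a : G -> R) (c : R) : (forall j, a j = c) -> uconv a c.
Proof.
  intros Ha eps He. apply uf_always; intros j.
  rewrite Ha, Rminus_diag, Rabs_R0. exact He.
Qed.

Lemma uconv_add (a b : G -> R) (la lb : R) :
  uconv a la -> uconv b lb -> uconv (fun j => a j + b j) (la + lb).
Proof.
  intros Ha Hb eps He.
  apply (uf_mono _ _ HU (fun j => Rabs (a j - la) < eps/2 /\ Rabs (b j - lb) < eps/2)).
  - intros j [A B]. solve_Rabs.
  - apply uf_inter; auto; [apply Ha | apply Hb]; lra.
Qed.

Lemma uconv_sub (a b : G -> R) (la lb : R) :
  uconv a la -> uconv b lb -> uconv (fun j => a j - b j) (la - lb).
Proof.
  intros Ha Hb eps He.
  apply (uf_mono _ _ HU (fun j => Rabs (a j - la) < eps/2 /\ Rabs (b j - lb) < eps/2)).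
  - intros j [A B]. solve_Rabs.
  - apply uf_inter; auto; [apply Ha | apply Hb]; lra.
Qed.

Lemma uconv_scal (a : G -> R) (la c : R) :
  uconv a la -> uconv (fun j => c * a j) (c * la).
Proof.
  intros Ha eps He.
  assert (P : 0 < eps / (Rabs c + 1))
    by (apply Rdiv_lt_0_compat; pose proof (Rabs_pos c); lra).
  refine (uf_mono _ _ HU _ _ (fun j H => _) (Ha _ P)).
  rewrite <- Rmult_minus_distr_l, Rabs_mult.
  apply mult_lt_of_lt_div; auto. apply Rabs_pos.
Qed.

Lemma uconv_bound (a : G -> R) (l K : R) :
  uconv a l -> (forall j, Rabs (a j) <= K) -> Rabs l <= K.
Proof.
  intros Ha Hb. destruct (Rle_lt_dec (Rabs l) K) as [|Hl]; auto.
  assert (He : 0 < Rabs l - K) by lra.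
  destruct (uf_nonempty _ (Ha _ He)) as [j Hj].
  specialize (Hb j). exfalso. solve_Rabs.
Qed.

End UltraLimits.

Arguments uconv {G} U a l.
Arguments ulim {G} U a.

Section Lip0Space.

Variables (A : Type) (dA : A -> A -> R) (a0 : A).

Lemma Lip0_zero : Lip0 dA a0 (fun _ => 0).
Proof.
  split; [reflexivity|]. exists 0. split; [lra|].
  intros x y. unfold dR. rewrite Rminus_0_r, Rabs_R0. lra.
Qed.

Lemma Lip0_add (f g : A -> R) :
  Lip0 dA a0 f -> Lip0 dA a0 g -> Lip0 dA a0 (fun x => f x + g x).
Proof.
  intros [Hf0 [K1 [HK1 Hf]]] [Hg0 [K2 [HK2 Hg]]]. split; [rewrite Hf0, Hg0; ring|].
  exists (K1 + K2); split; [lra|]. intros x y.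
  specialize (Hf x y); specialize (Hg x y). unfold dR in *.
  replace (f x + g x - (f y + g y)) with ((f x - f y) + (g x - g y)) by ring.
  eapply Rle_trans; [apply Rabs_triang|]. lra.
Qed.

Lemma Lip0_scal (f : A -> R) (a : R) : Lip0 dA a0 f -> Lip0 dA a0 (fun x => a * f x).
Proof.
  intros [Hf0 [K [HK Hf]]]. split; [rewrite Hf0; ring|].
  exists (Rabs a * K); split; [apply Rmult_le_pos; auto; apply Rabs_pos|].
  intros x y. unfold dR in *. rewrite <- Rmult_minus_distr_l, Rabs_mult, Rmult_assoc.
  apply Rmult_le_compat_l; [apply Rabs_pos | apply Hf].
Qed.

End Lip0Space.

Section Embedding.

Variables (X : Type) (d : X -> X -> R) (x0 : X).
Variables (G : Type) (Y : G -> X -> Prop) (Rj : G -> X -> X).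
Variables (U : (G -> Prop) -> Prop) (M : R).
Hypothesis HY : forall j x, Y j (Rj j x).
Hypothesis HR0 : forall j, Rj j x0 = x0.
Hypothesis HM : forall j, lipschitz_with d d (Rj j) M.
Hypothesis HU : is_ultrafilter G U.
Hypothesis Hconv : forall x eps, 0 < eps -> U (fun j => d (Rj j x) x < eps).

(* Norm bounds are nonnegative, since the index set is nonempty. *)
Lemma linf_norm_nonneg (F : Fam Y) (L : R) : linf_norm_le d Y F L -> 0 <= L.
Proof.
  intros HFL. destruct (uf_nonempty _ _ HU _ (uf_full _ _ HU)) as [j _].
  apply (HFL j).
Qed.

Lemma M_nonneg : 0 <= M.
Proof.
  destruct (uf_nonempty _ _ HU _ (uf_full _ _ HU)) as [j _]. apply (HM j).
Qed.

Definition restrict (f : X -> R) : Fam Y := fun j y => f (proj1_sig y).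

Lemma restrict_lip (f : X -> R) (K : R) :
  lipschitz_with d dR f K -> linf_norm_le d Y (restrict f) K.
Proof. intros [HK0 HK] j; split; auto. intros u v; apply HK. Qed.

Lemma restrict_Lip0 (f : X -> R) : Lip0 d x0 f -> in_linf_Lip0 d x0 Y (restrict f).
Proof.
  intros [Hf0 [K HK]]. split.
  - intros j. split; [intros h; exact Hf0|]. exists K; apply restrict_lip; auto.
  - exists K. apply restrict_lip; auto.
Qed.

Definition sample (F : Fam Y) (x : X) (j : G) : R := F j (exist _ (Rj j x) (HY j x)).

Definition extend (F : Fam Y) (x : X) : R := ulim U (sample F x).

Lemma fam_at_base (F : Fam Y) (j : G) (a : X) (h : Y j a) :
  in_linf_Lip0 d x0 Y F -> a = x0 -> F j (exist _ a h) = 0.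
Proof. intros [HF0 _] ->. apply (HF0 j). Qed.

Lemma sample_bound (F : Fam Y) (L : R) (x : X) (j : G) :
  in_linf_Lip0 d x0 Y F -> linf_norm_le d Y F L -> Rabs (sample F x j) <= L * (M * d x x0).
Proof.
  intros HF HFL.
  pose proof (HY j x0) as h. rewrite HR0 in h.
  destruct (HFL j) as [HL0 HL].
  specialize (HL (exist _ (Rj j x) (HY j x)) (exist _ x0 h)).
  unfold dR, dsub in HL; simpl in HL.
  rewrite (fam_at_base F j x0 h HF eq_refl), Rminus_0_r in HL.
  destruct (HM j) as [_ HMj]. specialize (HMj x x0). rewrite HR0 in HMj.
  apply Rle_trans with (1 := HL). apply Rmult_le_compat_l; auto.
Qed.

Lemma extend_spec (F : Fam Y) (x : X) :
  in_linf_Lip0 d x0 Y F -> uconv U (sample F x) (extend F x).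
Proof.
  intros HF. destruct HF as [HF0 [L HFL]].
  destruct (uconv_of_bounded _ _ HU (sample F x) (L * (M * d x x0))) as [l Hl].
  { intros j. apply sample_bound; [split; [|exists L]|]; auto. }
  unfold extend. rewrite (ulim_eq _ _ HU _ l Hl). exact Hl.
Qed.

Lemma extend_lip (F : Fam Y) (L : R) :
  in_linf_Lip0 d x0 Y F -> linf_norm_le d Y F L -> lipschitz_with d dR (extend F) (M * L).
Proof.
  intros HF HFL. split; [apply Rmult_le_pos; [apply M_nonneg | apply (linf_norm_nonneg F)]; auto|].
  intros x y. unfold dR.
  apply (uconv_bound _ _ HU _ _ _ (uconv_sub _ _ HU _ _ _ _ (extend_spec F x HF)
                                               (extend_spec F y HF))).
  intros j. destruct (HFL j) as [HL0 HL].
  specialize (HL (exist _ (Rj j x) (HY j x)) (exist _ (Rj j y) (HY j y))).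
  unfold dR, dsub in HL; simpl in HL.
  destruct (HM j) as [_ HMj]. specialize (HMj x y).
  apply Rle_trans with (1 := HL).
  replace (M * L * d x y) with (L * (M * d x y)) by ring.
  apply Rmult_le_compat_l; auto.
Qed.

Lemma extend_Lip0 (F : Fam Y) : in_linf_Lip0 d x0 Y F -> Lip0 d x0 (extend F).
Proof.
  intros HF. split.
  - apply (ulim_eq _ _ HU), uconv_const; auto.
    intros j. apply fam_at_base; auto.
  - destruct HF as [HF0 [L HFL]]. exists (M * L).
    apply extend_lip; [split; [|exists L]|]; auto.
Qed.

Lemma extend_add (F H : Fam Y) :
  in_linf_Lip0 d x0 Y F -> in_linf_Lip0 d x0 Y H ->
  extend (fam_add F H) = fun x => extend F x + extend H x.
Proof.
  intros HF HH. apply functional_extensionality; intros x.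
  apply (ulim_eq _ _ HU).
  exact (uconv_add _ _ HU _ _ _ _ (extend_spec F x HF) (extend_spec H x HH)).
Qed.

Lemma extend_scal (F : Fam Y) (a : R) :
  in_linf_Lip0 d x0 Y F -> extend (fam_scal a F) = fun x => a * extend F x.
Proof.
  intros HF. apply functional_extensionality; intros x.
  apply (ulim_eq _ _ HU).
  exact (uconv_scal _ _ HU _ _ a (extend_spec F x HF)).
Qed.

Lemma lipschitz_uconv_retract (f : X -> R) (K : R) (x : X) :
  lipschitz_with d dR f K -> uconv U (fun j => f (Rj j x)) (f x).
Proof.
  intros [HK0 HK] eps He.
  assert (P : 0 < eps / (K + 1)) by (apply Rdiv_lt_0_compat; lra).
  refine (uf_mono _ _ HU _ _ (fun j H => _) (Hconv x _ P)).
  apply Rle_lt_trans with (K * d (Rj j x) x); [apply HK|].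
  apply mult_lt_of_lt_div; auto.
Qed.

Lemma extend_restrict (f : X -> R) : Lip0 d x0 f -> extend (restrict f) = f.
Proof.
  intros [_ [K HK]]. apply functional_extensionality; intros x.
  apply (ulim_eq _ _ HU). exact (lipschitz_uconv_retract f K x HK).
Qed.

End Embedding.

Arguments restrict {X G Y} f.
Arguments extend {X G Y Rj} U HY F x.

Theorem mainTheorem12 (X : Type) (d : X -> X -> R) (x0 : X)
  (G : Type) (Y : G -> X -> Prop) (Rj : G -> X -> X)
  (U : (G -> Prop) -> Prop) :
  is_metric X d ->
  (forall j x, Y j (Rj j x)) ->
  (forall j, Rj j x0 = x0) ->
  (exists M, forall j, lipschitz_with d d (Rj j) M) ->
  is_ultrafilter G U ->
  (forall x eps, 0 < eps -> U (fun j => d (Rj j x) x < eps)) ->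
  Lip0_compl_embeds d x0 Y.
Proof.
  intros _ HY HR0 [M HM] HU Hconv.
  pose proof (extend_Lip0 X d x0 G Y Rj U M HY HR0 HM HU) as ext_Lip0.
  pose proof (extend_lip X d x0 G Y Rj U M HY HR0 HM HU) as ext_lip.
  pose proof (extend_add X d x0 G Y Rj U M HY HR0 HM HU) as ext_add.
  pose proof (extend_scal X d x0 G Y Rj U M HY HR0 HM HU) as ext_scal.
  pose proof (extend_restrict X d x0 G Y Rj U HY HU Hconv) as ext_restrict.
  set (J := @restrict X G Y).
  set (S := fun F => exists f, Lip0 d x0 f /\ F = J f).
  exists S, (fun F => J (extend U HY F)), J.
  split; [intros F [f [Hf ->]]; apply restrict_Lip0; auto|].
  split; [exists (fun _ => 0); split; [apply Lip0_zero | reflexivity]|].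
  split; [intros F H a [f [Hf ->]] [h [Hh ->]];
          split; [exists (fun x => f x + h x) | exists (fun x => a * f x)];
          split; auto using Lip0_add, Lip0_scal|].
  split; [intros F HF; exists (extend U HY F); auto|].
  split; [intros F [f [Hf ->]]; unfold J; rewrite ext_restrict; auto|].
  split; [intros F H a HF HH; rewrite ext_add, ext_scal; auto|].
  split; [exists M; intros F L HF HFL; apply restrict_lip, ext_lip; auto|].
  split; [intros f Hf; exists f; auto|].
  split; [intros F [f [Hf ->]]; exists f; auto|].
  split; [intros; split; reflexivity|].
  split; [exists 1; intros f L Hf HL; rewrite Rmult_1_l; apply restrict_lip; auto|].
  (* ||f|| <= M ||J f||, because f = ext (J f). *)
  exists M. intros f L Hf HJ.
  rewrite <- (ext_restrict f Hf). apply ext_lip; auto. apply restrict_Lip0; auto.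
Qed.
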